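(* Fix $k\in\mathbb{N}$. Suppose $M$ is a matroid that is nearly finitary but not $n$-nearly finitary for any $n\in\mathbb{N}$. Then $M[k]$ is nearly finitary but not $n$-nearly finitary for any $n\in\mathbb{N}$.
   Context: Matroids (possibly infinite): $\emptyset$ independent; subsets of independent sets independent; if $B$ is maximal independent and $A$ non-maximal independent, then $A\cup\{b\}$ is independent for some $b\in B\setminus A$; for independent $A\subseteq X\subseteq E$ there is a maximal independent $S$ with $A\subseteq S\subseteq X$. Bases are maximal independent sets; the rank is the cardinality of a base (infinite cardinalities identified). For a matroid $M=(E,\mathcal{L})$ of rank at least $k$, $M[k]=(E,\mathcal{L}[k])$ with $\mathcal{L}[k]=\{S\in\mathcal{L}:\exists T\in\mathcal{L},\ T\supseteq S,\ |T\setminus S|=k\}$, which is a matroid. The finitarization $M^{\mathrm{fin}}$ has as independent sets those sets all of whose finite subsets are independent in $M$. $M$ is nearly finitary if $F\setminus B$ is finite whenever a base $F$ of $M^{\mathrm{fin}}$ contains a base $B$ of $M$; $n$-nearly finitary if $|F\setminus B|\le n$ for all such pairs. *)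

From Stdlib Require Import List Arith.
Import ListNotations.

Definition set_of (E : Type) := E -> Prop.

Definition subset {E} (A B : set_of E) : Prop := forall x, A x -> B x.
Definition emptyset {E} : set_of E := fun _ => False.
Definition add1 {E} (A : set_of E) (b : E) : set_of E := fun x => A x \/ x = b.
Definition setminus {E} (A B : set_of E) : set_of E := fun x => A x /\ ~ B x.

Definition indep_sys (E : Type) := set_of E -> Prop.

Definition maximal_indep_in {E} (L : indep_sys E) (X S : set_of E) : Prop :=
  subset S X /\ L S /\ forall T, L T -> subset S T -> subset T X -> subset T S.

Definition is_base {E} (L : indep_sys E) (B : set_of E) : Prop :=
  maximal_indep_in L (fun _ => True) B.

Definition is_matroid {E} (L : indep_sys E) : Prop :=
  L emptyset /\
  (forall A B, L B -> subset A B -> L A) /\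
  (forall A B, is_base L B -> L A -> ~ is_base L A ->
     exists b, B b /\ ~ A b /\ L (add1 A b)) /\
  (forall A X, L A -> subset A X ->
     exists S, subset A S /\ maximal_indep_in L X S).

Definition finite_set {E} (A : set_of E) : Prop :=
  exists l : list E, forall x, A x -> In x l.

Definition card_le {E} (A : set_of E) (n : nat) : Prop :=
  exists l : list E, length l <= n /\ forall x, A x -> In x l.

Definition card_eq {E} (A : set_of E) (n : nat) : Prop :=
  exists l : list E, NoDup l /\ length l = n /\ forall x, A x <-> In x l.

Definition trunc_indep {E} (L : indep_sys E) (k : nat) : indep_sys E :=
  fun S => L S /\ exists T, L T /\ subset S T /\ card_eq (setminus T S) k.

Definition fin_indep {E} (L : indep_sys E) : indep_sys E :=
  fun S => forall F, subset F S -> finite_set F -> L F.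

Definition nearly_finitary {E} (L : indep_sys E) : Prop :=
  forall F B, is_base (fin_indep L) F -> is_base L B -> subset B F ->
    finite_set (setminus F B).

Definition n_nearly_finitary {E} (L : indep_sys E) (n : nat) : Prop :=
  forall F B, is_base (fin_indep L) F -> is_base L B -> subset B F ->
    card_le (setminus F B) n.

From Stdlib Require Import List Lia Classical.
Import ListNotations.

(* Finite subsets of an infinite set independent in M^fin extend by k further
   elements of it, so M^fin and M[k]^fin have the same infinite bases; and the
   bases of M[k] are the bases of M with k elements removed.  If a base B of
   M[k] lies in an infinite base F of M^fin, a maximal M-independent S with
   B ⊆ S ⊆ F is a base of M, so F \ S is finite and |S \ B| <= k.  If a base B
   of M lies in an infinite base F of M^fin, then B is infinite, and removing k
   elements gives a base B' of M[k] with F \ B ⊆ F \ B'.  All counting rests on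
   |J \ I| <= |K \ I| for J independent and K maximal independent in a common
   set, with I ⊆ J ∩ K. *)

Lemma subset_add1 {E} (A : set_of E) b : subset A (add1 A b).
Proof. intros x Ax; now left. Qed.

Lemma add1_self {E} (A : set_of E) b : add1 A b b.
Proof. now right. Qed.

Lemma add1_subset {E} (A X : set_of E) b : subset A X -> X b -> subset (add1 A b) X.
Proof. intros HAX Xb x [Ax | ->]; auto. Qed.

Lemma infinite_superset {E} (A B : set_of E) :
  ~ finite_set A -> subset A B -> ~ finite_set B.
Proof. intros HA HAB [l Hl]; apply HA; exists l; auto. Qed.

(* A longest duplicate-free list of elements of A enumerates A. *)
Lemma bounded_set_enum {E} (A : set_of E) n :
  (forall l, NoDup l -> (forall x, In x l -> A x) -> length l <= n) ->
  exists l, NoDup l /\ (forall x, A x <-> In x l) /\ length l <= n.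
Proof.
  intros Hbound.
  set (Q := fun j => exists l, NoDup l /\ (forall x, In x l -> A x) /\ length l = j).
  assert (Hlongest : forall m, Q 0 -> ~ Q m -> exists j, Q j /\ ~ Q (S j)).
  { induction m as [|m IH]; intros HQ0 HQm; [contradiction|].
    destruct (classic (Q m)); [now exists m | auto]. }
  destruct (Hlongest (S n)) as [j [[l [Hnd [Hl Hlen]]] HQS]].
  - exists []; repeat split; [constructor | intros x []].
  - intros [l [Hnd [Hl Hlen]]]; specialize (Hbound l Hnd Hl); lia.
  - exists l; split; [|split]; auto.
    intros x; split; auto.
    intros Ax; apply NNPP; intros Hx; apply HQS.
    exists (x :: l); split; [now constructor|split; [|simpl; lia]].
    intros y [<- | Hy]; auto.
Qed.

Lemma finite_set_enum {E} (A : set_of E) :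
  finite_set A -> exists l, NoDup l /\ (forall x, A x <-> In x l).
Proof.
  intros [l0 Hl0].
  destruct (bounded_set_enum A (length l0)) as [l [Hnd [Hl _]]].
  - intros l Hnd Hl; apply NoDup_incl_length; auto; intros x Hx; auto.
  - eauto.
Qed.

Lemma infinite_NoDup_avoiding {E} (A : set_of E) (avoid : list E) n :
  ~ finite_set A ->
  exists l, NoDup l /\ length l = n /\ forall x, In x l -> A x /\ ~ In x avoid.
Proof.
  intros HA; induction n as [|n [l [Hnd [Hlen Hl]]]].
  - exists []; split; [constructor | split; [reflexivity | intros x []]].
  - destruct (classic (exists x, A x /\ ~ In x (avoid ++ l))) as [[x [Ax Hx]] | Hfull].
    + exists (x :: l); split; [|split].
      * constructor; auto; intros Hxl; apply Hx, in_or_app; auto.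
      * simpl; lia.
      * intros y [<- | Hy]; auto.
        split; auto; intros Hxa; apply Hx, in_or_app; auto.
    + exfalso; apply HA; exists (avoid ++ l); intros x Ax.
      apply NNPP; intros Hx; apply Hfull; eauto.
Qed.

Lemma card_eq_ext {E} (A B : set_of E) n :
  (forall x, A x <-> B x) -> card_eq A n -> card_eq B n.
Proof.
  intros HAB [l [Hnd [Hlen Hl]]]; exists l; repeat split; auto.
  - intros Bx; apply Hl, HAB; auto.
  - intros Hx; apply HAB, Hl; auto.
Qed.

Lemma card_eq_remove {E} (A : set_of E) m x :
  card_eq A (S m) -> A x -> card_eq (fun y => A y /\ y <> x) m.
Proof.
  intros [l [Hnd [Hlen Hl]]] Ax.
  apply Hl in Ax; destruct (in_split _ _ Ax) as [l1 [l2 ->]].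
  exists (l1 ++ l2); split; [|split].
  - eapply NoDup_remove_1; eauto.
  - rewrite length_app in *; simpl in Hlen; lia.
  - intros y; rewrite Hl, !in_app_iff; simpl; split.
    + intros [[Hy | [<- | Hy]] Hyx]; tauto.
    + intros Hy; split; [tauto|].
      intros ->; apply (NoDup_remove_2 _ _ _ Hnd), in_app_iff; auto.
Qed.

Lemma card_eq_unique {E} (A : set_of E) m n : card_eq A m -> card_eq A n -> m = n.
Proof.
  intros [l [Hl [<- HlA]]] [l' [Hl' [<- Hl'A]]].
  enough (length l <= length l' /\ length l' <= length l) by lia.
  split; apply NoDup_incl_length; auto; intros x Hx.
  - apply Hl'A, HlA; auto.
  - apply HlA, Hl'A; auto.
Qed.

Lemma card_eq_0_empty {E} (A : set_of E) x : card_eq A 0 -> ~ A x.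
Proof. intros [[|] [_ [Hlen Hl]]] Ax; [apply Hl in Ax; contradiction | discriminate]. Qed.

Section Matroid.

Context {E : Type} (L : indep_sys E).

Lemma maximal_indep_add1 X S t :
  maximal_indep_in L X S -> X t -> L (add1 S t) -> S t.
Proof.
  intros [HSX [_ HSmax]] Xt HSt.
  apply (HSmax (add1 S t)); auto using subset_add1, add1_self, add1_subset.
Qed.

Lemma maximal_indep_in_sub X Y S :
  maximal_indep_in L X S -> subset S Y -> subset Y X -> maximal_indep_in L Y S.
Proof.
  intros [_ [HS HSmax]] HSY HYX; split; [|split]; auto.
  intros T HT HST HTY; apply HSmax; auto; intros x Tx; auto.
Qed.

Hypothesis HM : is_matroid L.

Lemma indep_subset A B : L B -> subset A B -> L A.
Proof. apply HM. Qed.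

Lemma base_augment A B :
  is_base L B -> L A -> ~ is_base L A -> exists b, B b /\ ~ A b /\ L (add1 A b).
Proof. apply HM. Qed.

Lemma maximal_indep_exists A X :
  L A -> subset A X -> exists S, subset A S /\ maximal_indep_in L X S.
Proof. apply HM. Qed.

Lemma base_exists A : L A -> exists B, subset A B /\ is_base L B.
Proof. intros HA; apply maximal_indep_exists; auto; intros x _; exact I. Qed.

Lemma maximal_indep_base X T B :
  maximal_indep_in L X T -> subset B X -> is_base L B -> is_base L T.
Proof.
  intros HT HBX HB; apply NNPP; intros HTnb.
  destruct (base_augment T B HB (proj1 (proj2 HT)) HTnb) as [b [Bb [nTb HTb]]].
  apply nTb, (maximal_indep_add1 X T b); auto.
Qed.

Lemma base_exchange B P z :
  is_base L B -> is_base L P -> B z -> ~ P z ->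
  exists w, P w /\ ~ B w /\ L (add1 (fun x => B x /\ x <> z) w).
Proof.
  intros HB HP Bz nPz.
  set (C := fun x => B x /\ x <> z).
  assert (HC : L C) by (apply (indep_subset C B); [apply HB | intros x []; auto]).
  assert (HCnb : ~ is_base L C).
  { intros [_ [_ HCmax]].
    assert (HBC : subset B C) by (apply HCmax; [apply HB | intros x []; auto | intros x _; exact I]).
    apply (HBC z Bz); reflexivity. }
  destruct (base_augment C P HP HC HCnb) as [w [Pw [nCw HCw]]].
  exists w; split; [|split]; auto.
  intros Bw; apply nCw; split; auto; intros ->; contradiction.
Qed.

Lemma maximal_indep_in_add1 X S b :
  maximal_indep_in L X S -> L (add1 S b) -> maximal_indep_in L (add1 X b) (add1 S b).
Proof.
  intros HS HSb; pose proof HS as [HSX _].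
  split; [|split]; auto.
  - intros x [Sx | ->]; [left; auto | right; auto].
  - intros T HT HST HTX x Tx.
    destruct (HTX x Tx) as [Xx | ->]; [left | right; auto].
    apply (maximal_indep_add1 X S x); auto.
    apply (indep_subset _ T HT), add1_subset; auto.
    intros y Sy; apply HST; left; auto.
Qed.

(* For a base BK ⊇ K, a base T ⊇ A inside
   A ∪ BK leaves A only through BK \ Y; exchanging some z ∈ T \ P out of BK
   against a base P ⊇ A + y inside T + y brings in an element of Y \ BK that
   could be added to K. *)
Lemma maximal_indep_augment Y K A y :
  maximal_indep_in L Y K -> subset A Y -> L A -> Y y -> ~ A y -> L (add1 A y) ->
  exists x, K x /\ ~ A x /\ L (add1 A x).
Proof.
  intros HK HAY HA Yy nAy HAy; apply NNPP; intros Hno.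
  destruct (base_exists K (proj1 (proj2 HK))) as [BK [HKBK HBK]].
  assert (HBK_Y : forall z, BK z -> Y z -> K z).
  { intros z BKz Yz; apply (maximal_indep_add1 Y K z); auto.
    apply (indep_subset _ BK); [apply HBK | apply add1_subset; auto]. }
  destruct (maximal_indep_exists A (fun x => A x \/ BK x) HA) as [T [HAT HT]].
  { intros x Ax; left; auto. }
  assert (HTb : is_base L T) by (apply (maximal_indep_base _ T BK HT); auto; intros x; right; auto).
  assert (HTA : forall t, T t -> ~ A t -> BK t /\ ~ Y t).
  { intros t Tt nAt; destruct (proj1 HT t Tt) as [At | BKt]; [contradiction|].
    split; auto; intros Yt; apply Hno; exists t; split; [apply HBK_Y; auto | split; auto].
    apply (indep_subset _ T); [apply HT | apply add1_subset; auto]. }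
  destruct (maximal_indep_exists (add1 A y) (add1 T y) HAy) as [P [HAyP HP]].
  { intros x [Ax | ->]; [left | right]; auto. }
  assert (HPb : is_base L P) by (apply (maximal_indep_base _ P T HP); auto using subset_add1).
  assert (HTP : exists z, T z /\ ~ P z).
  { apply NNPP; intros HTP.
    assert (Ty : T y).
    { apply (maximal_indep_add1 _ T y HTb I), (indep_subset _ P); [apply HP|].
      apply add1_subset; [|apply HAyP, add1_self].
      intros x Tx; apply NNPP; intros nPx; apply HTP; eauto. }
    apply (HTA y Ty nAy); auto. }
  destruct HTP as [z [Tz nPz]].
  assert (nAz : ~ A z) by (intros Az; apply nPz, HAyP; left; auto).
  destruct (HTA z Tz nAz) as [BKz nYz].
  destruct (base_exchange BK P z HBK HPb BKz nPz) as [w [Pw [nBKw HBKw]]].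
  assert (Yw : Y w).
  { destruct (proj1 HP w Pw) as [Tw | ->]; auto.
    destruct (classic (A w)) as [Aw | nAw]; auto.
    exfalso; apply nBKw, HTA; auto. }
  apply nBKw, HKBK, (maximal_indep_add1 Y K w); auto.
  apply (indep_subset _ _ HBKw), add1_subset; [|apply add1_self].
  intros x Kx; left; split; auto; intros ->; apply nYz, HK; auto.
Qed.

Lemma maximal_indep_card_le Y K I J m l :
  maximal_indep_in L Y K -> subset I K -> card_eq (setminus K I) m ->
  subset J Y -> L J -> subset I J ->
  NoDup l -> (forall x, In x l -> J x /\ ~ I x) -> length l <= m.
Proof.
  intros HK; revert I J m.
  induction l as [|y l IH]; intros I J m HIK HKI HJY HJ HIJ Hnd Hl; simpl; [lia|].
  inversion Hnd as [|? ? nly Hnd']; subst.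
  set (J' := fun x => I x \/ In x l).
  assert (HJ'J : subset J' J) by (intros x [Ix | lx]; [apply HIJ | apply Hl; right]; auto).
  destruct (Hl y (or_introl eq_refl)) as [Jy nIy].
  destruct (maximal_indep_augment Y K J' y HK) as [x [Kx [nJ'x HJ'x]]].
  - intros x J'x; apply HJY, HJ'J; auto.
  - apply (indep_subset _ J); auto.
  - auto.
  - intros [Iy | ly]; auto.
  - apply (indep_subset _ J); auto; apply add1_subset; auto.
  - assert (nIx : ~ I x) by (intros Ix; apply nJ'x; left; auto).
    destruct m as [|m]; [exfalso; apply (card_eq_0_empty _ x HKI); split; auto|].
    enough (length l <= m) by lia.
    apply (IH (add1 I x) (add1 J' x)).
    + apply add1_subset; auto.
    + apply (card_eq_ext (fun z => setminus K I z /\ z <> x)).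
      * intros z; unfold setminus, add1; split; [tauto|].
        intros [Kz Hz]; split; [split|]; auto.
      * apply card_eq_remove; auto; split; auto.
    + apply add1_subset; [intros z J'z; apply HJY, HJ'J; auto | apply HK; auto].
    + auto.
    + intros z [Iz | ->]; [left; left | right]; auto.
    + auto.
    + intros z lz; split; [left; right; auto|].
      intros [Iz | ->]; [apply (Hl z); simpl; auto | apply nJ'x; right; auto].
Qed.

Lemma maximal_indep_card_eq Y K1 K2 I m :
  maximal_indep_in L Y K1 -> maximal_indep_in L Y K2 -> subset I K1 -> subset I K2 ->
  card_eq (setminus K1 I) m -> card_eq (setminus K2 I) m.
Proof.
  intros HK1 HK2 HIK1 HIK2 Hc1.
  destruct (bounded_set_enum (setminus K2 I) m) as [l [Hnd [Hl Hlen]]].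
  { intros l Hnd Hl; apply (maximal_indep_card_le Y K1 I K2 m l); auto; apply HK2. }
  assert (Hc2 : card_eq (setminus K2 I) (length l)) by (exists l; auto).
  enough (m <= length l) by (replace m with (length l) by lia; auto).
  destruct Hc1 as [l1 [Hnd1 [<- Hl1]]].
  apply (maximal_indep_card_le Y K2 I K1 (length l) l1); auto; try apply HK1.
  intros x; apply Hl1.
Qed.

Lemma fin_base_add1_dependent F b :
  is_base (fin_indep L) F -> ~ F b ->
  exists D, subset D F /\ finite_set D /\ L D /\ ~ L (add1 D b).
Proof.
  intros [_ [HF HFmax]] nFb.
  assert (HFb : ~ fin_indep L (add1 F b)).
  { intros HFb; apply nFb, (HFmax (add1 F b)); auto using subset_add1, add1_self.
    intros x _; exact I. }
  apply not_all_ex_not in HFb as [G HG].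
  apply imply_to_and in HG as [HGF HG]; apply imply_to_and in HG as [[lG HlG] nLG].
  exists (fun x => G x /\ F x); split; [|split; [|split]].
  - intros x []; auto.
  - exists lG; intros x []; auto.
  - apply HF; [intros x []; auto | exists lG; intros x []; auto].
  - intros HDb; apply nLG, (indep_subset _ _ HDb).
    intros x Gx; destruct (HGF x Gx) as [Fx | ->]; [left; split | right]; auto.
Qed.

(* Otherwise S + b is independent for some b ∉ F, and a finite D ⊆ F has D + b
   dependent.  A maximal independent K ⊇ D of S ∪ D + b misses b; with P = K ∩ S,
   comparing K with S + b in S ∪ D + b and with S in S ∪ D gives
   |K \ P| = |S \ P| + 1 and |K \ P| = |S \ P|. *)
Lemma fin_base_maximal_indep_base F S :
  is_base (fin_indep L) F -> maximal_indep_in L F S -> is_base L S.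
Proof.
  intros HF HS; apply NNPP; intros HSnb.
  destruct (base_exists emptyset) as [B [_ HB]]; [apply HM|].
  destruct (base_augment S B HB (proj1 (proj2 HS)) HSnb) as [b [_ [nSb HSb]]].
  assert (nFb : ~ F b) by (intros Fb; apply nSb, (maximal_indep_add1 F S b); auto).
  destruct (fin_base_add1_dependent F b HF nFb) as [D [HDF [HDfin [HD HDb]]]].
  set (SD := fun x => S x \/ D x).
  assert (HS_SD : maximal_indep_in L SD S).
  { apply (maximal_indep_in_sub F); auto; [intros x; left; auto|].
    intros x [Sx | Dx]; [apply HS | apply HDF]; auto. }
  assert (HSb_Y : maximal_indep_in L (add1 SD b) (add1 S b))
    by (apply maximal_indep_in_add1; auto).
  destruct (maximal_indep_exists D (add1 SD b) HD) as [K [HDK HK]].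
  { intros x Dx; left; right; auto. }
  assert (nKb : ~ K b).
  { intros Kb; apply HDb, (indep_subset _ K); [apply HK | apply add1_subset; auto]. }
  assert (HK_SD : maximal_indep_in L SD K).
  { apply (maximal_indep_in_sub (add1 SD b)); auto using subset_add1.
    intros x Kx; destruct (proj1 HK x Kx) as [SDx | ->]; [auto | contradiction]. }
  set (P := fun x => K x /\ S x).
  destruct (finite_set_enum (setminus K P)) as [lK [HlK HlKe]].
  { destruct HDfin as [lD HlD]; exists lD; intros x [Kx nPx]; apply HlD.
    destruct (proj1 HK_SD x Kx) as [Sx | Dx]; [exfalso; apply nPx; split|]; auto. }
  assert (HcK : card_eq (setminus K P) (length lK)) by (exists lK; auto).
  assert (HcSb : card_eq (setminus (add1 S b) P) (length lK)).
  { apply (maximal_indep_card_eq (add1 SD b) K); auto; intros x [Kx Sx]; [auto | left; auto]. }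
  revert HcK HcSb; generalize (length lK); intros [|m] HcK HcSb.
  - apply (card_eq_0_empty _ b HcSb); split; [right; auto | intros [_ Sb]; auto].
  - assert (HcS : card_eq (setminus S P) m).
    { apply (card_eq_ext (fun z => setminus (add1 S b) P z /\ z <> b)).
      - intros z; unfold setminus, add1; split.
        + intros [[[Sz | ->] nPz] nzb]; [auto | contradiction].
        + intros [Sz nPz]; split; [split|]; auto; intros ->; contradiction.
      - apply card_eq_remove; auto; split; [right; auto | intros [_ Sb]; auto]. }
    assert (HcK' : card_eq (setminus K P) m).
    { apply (maximal_indep_card_eq SD S); auto; intros x [Kx Sx]; auto. }
    pose proof (card_eq_unique _ _ _ HcK HcK'); lia.
Qed.

Lemma base_infinite_of_infinite_fin_base F B :
  is_base (fin_indep L) F -> ~ finite_set F -> is_base L B -> ~ finite_set B.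
Proof.
  intros HF HFinf HB HBfin.
  destruct (finite_set_enum B HBfin) as [lB [HlB HlBe]].
  destruct (infinite_NoDup_avoiding F [] (S (length lB)) HFinf) as [l [Hnd [Hlen Hl]]].
  enough (S (length lB) <= length lB) by lia.
  rewrite <- Hlen at 1.
  apply (maximal_indep_card_le (fun _ => True) B emptyset (fun x => In x l)); auto.
  - intros x [].
  - exists lB; split; [|split]; auto; intros x; rewrite <- HlBe; unfold setminus, emptyset; tauto.
  - intros x _; exact I.
  - apply HF; [intros x lx; apply Hl; auto | exists l; auto].
  - intros x [].
Qed.

Variable k : nat.

Lemma trunc_indep_indep S : trunc_indep L k S -> L S.
Proof. intros [HS _]; exact HS. Qed.

Lemma fin_indep_trunc_infinite T :
  ~ finite_set T -> fin_indep L T -> fin_indep (trunc_indep L k) T.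
Proof.
  intros HTinf HT G HGT [lG HlG]; split; [apply HT; auto; exists lG; auto|].
  destruct (infinite_NoDup_avoiding T lG k HTinf) as [l [Hnd [Hlen Hl]]].
  exists (fun x => G x \/ In x l); split; [|split].
  - apply HT; [intros x [Gx | lx]; [| apply Hl]; auto|].
    exists (lG ++ l); intros x [Gx | lx]; apply in_or_app; auto.
  - intros x Gx; left; auto.
  - exists l; split; [|split]; auto; intros x; split.
    + intros [[Gx | lx] nGx]; [contradiction | auto].
    + intros lx; split; [right; auto|].
      intros Gx; apply (Hl x lx), HlG; auto.
Qed.

Lemma fin_indep_of_trunc T :
  fin_indep (trunc_indep L k) T -> fin_indep L T.
Proof. intros HT G HGT HGfin; apply trunc_indep_indep, HT; auto. Qed.

Lemma fin_base_trunc_infinite F :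
  ~ finite_set F ->
  is_base (fin_indep L) F <-> is_base (fin_indep (trunc_indep L k)) F.
Proof.
  intros HFinf; split; intros [_ [HF HFmax]]; (split; [intros x _; exact I | split]).
  - apply fin_indep_trunc_infinite; auto.
  - intros T HT HFT _; apply HFmax; auto; [apply fin_indep_of_trunc | intros x _]; auto.
  - apply fin_indep_of_trunc; auto.
  - intros T HT HFT _; apply HFmax; auto; [|intros x _; exact I].
    apply fin_indep_trunc_infinite; auto; apply (infinite_superset F); auto.
Qed.

Lemma trunc_indep_add1 B T x :
  subset B T -> card_eq (setminus T B) k -> ~ T x -> L (add1 T x) ->
  trunc_indep L k (add1 B x).
Proof.
  intros HBT HTc nTx HTx; split.
  - apply (indep_subset _ _ HTx); intros y [By | ->]; [left | right]; auto.
  - exists (add1 T x); split; [|split]; auto.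
    + intros y [By | ->]; [left | right]; auto.
    + apply (card_eq_ext (setminus T B)); auto.
      intros y; unfold setminus, add1; split.
      * intros [Ty nBy]; split; auto; intros [By | ->]; auto.
      * intros [[Ty | ->] Hy]; [split; auto | exfalso; apply Hy; right; auto].
Qed.

Lemma trunc_base_extend B :
  is_base (trunc_indep L k) B ->
  exists B0, is_base L B0 /\ subset B B0 /\ card_eq (setminus B0 B) k.
Proof.
  intros [_ [[HB [T [HT [HBT HTc]]]] HBmax]].
  destruct (base_exists T HT) as [B0 [HTB0 HB0]].
  assert (HB0T : forall x, B0 x -> ~ B x -> T x).
  { intros x B0x nBx; apply NNPP; intros nTx.
    apply nBx, (HBmax (add1 B x)); auto using subset_add1, add1_self; [|intros y _; exact I].
    apply (trunc_indep_add1 B T); auto.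
    apply (indep_subset _ B0); [apply HB0 | apply add1_subset; auto]. }
  exists B0; split; [|split]; auto; [intros x Bx; auto|].
  apply (card_eq_ext (setminus T B)); auto.
  intros x; split; intros [Hx nBx]; split; auto.
Qed.

Lemma trunc_base_of_base B0 B :
  is_base L B0 -> subset B B0 -> card_eq (setminus B0 B) k -> is_base (trunc_indep L k) B.
Proof.
  intros HB0 HBB0 HB0c; split; [intros x _; exact I | split].
  - split; [apply (indep_subset _ B0); auto; apply HB0|].
    exists B0; split; [apply HB0 | split]; auto.
  - intros G [HG [T [HT [HGT [lT [HlT [HlTlen HlTe]]]]]]] HBG _ x Gx.
    apply NNPP; intros nBx.
    enough (length (x :: lT) <= k) by (simpl in *; lia).
    apply (maximal_indep_card_le (fun _ => True) B0 B T k (x :: lT)); auto.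
    + intros y _; exact I.
    + intros y By; apply HGT, HBG; auto.
    + constructor; auto; intros lx; apply HlTe in lx as [_ nGx]; contradiction.
    + intros y [<- | ly]; [split; auto|].
      apply HlTe in ly as [Ty nGy]; split; auto.
Qed.

Lemma trunc_nearly_finitary : nearly_finitary L -> nearly_finitary (trunc_indep L k).
Proof.
  intros HNF F B HF HB HBF.
  destruct (classic (finite_set F)) as [[lF HlF] | HFinf].
  { exists lF; intros x [Fx _]; auto. }
  apply (fin_base_trunc_infinite F HFinf) in HF.
  destruct (trunc_base_extend B HB) as [B0 [HB0 [HBB0 HB0c]]].
  assert (HBL : L B) by (apply trunc_indep_indep, HB).
  destruct (maximal_indep_exists B F HBL HBF) as [S [HBS HS]].
  destruct (HNF F S HF (fin_base_maximal_indep_base F S HF HS) (proj1 HS))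
    as [lFS HlFS].
  destruct (bounded_set_enum (setminus S B) k) as [lSB [_ [HlSB _]]].
  { intros l Hnd Hl; apply (maximal_indep_card_le (fun _ => True) B0 B S k l); auto.
    - intros x _; exact I.
    - apply HS. }
  exists (lFS ++ lSB); intros x [Fx nBx]; apply in_or_app.
  destruct (classic (S x)); [right; apply HlSB | left; apply HlFS]; split; auto.
Qed.

Lemma n_nearly_finitary_of_trunc n :
  n_nearly_finitary (trunc_indep L k) n -> n_nearly_finitary L n.
Proof.
  intros Hn F B HF HB HBF.
  destruct (classic (finite_set F)) as [HFfin | HFinf].
  { exists []; split; [simpl; lia|]; intros x [Fx nBx]; apply nBx.
    apply (maximal_indep_add1 _ B x HB I), (indep_subset _ F).
    - apply HF; auto; intros y Fy; auto.
    - apply add1_subset; auto. }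
  destruct (infinite_NoDup_avoiding B [] k (base_infinite_of_infinite_fin_base F B HF HFinf HB))
    as [l [Hnd [Hlen Hl]]].
  set (B' := fun x => B x /\ ~ In x l).
  assert (HB' : is_base (trunc_indep L k) B').
  { apply (trunc_base_of_base B); auto; [intros x []; auto|].
    exists l; split; [|split]; auto; intros x; unfold setminus, B'; split.
    - intros [Bx HBx]; apply NNPP; intros lx; auto.
    - intros lx; split; [apply Hl | intros [_ nlx]]; auto. }
  destruct (Hn F B') as [lFB [Hlen' HlFB]]; auto.
  - apply fin_base_trunc_infinite; auto.
  - intros x [Bx _]; auto.
  - exists lFB; split; auto; intros x [Fx nBx]; apply HlFB; split; auto.
    intros [Bx _]; auto.
Qed.

End Matroid.

Theorem theorem3p4p5 (E : Type) (L : indep_sys E) (k : nat) :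
  is_matroid L ->
  nearly_finitary L ->
  (forall n : nat, ~ n_nearly_finitary L n) ->
  nearly_finitary (trunc_indep L k) /\
  (forall n : nat, ~ n_nearly_finitary (trunc_indep L k) n).
Proof.
  intros HM HNF HNN; split.
  - exact (trunc_nearly_finitary L HM k HNF).
  - intros n Hn; exact (HNN n (n_nearly_finitary_of_trunc L HM k n Hn)).
Qed.
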